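(* Let $G=(V,\mathcal E,w)$ be an undirected, connected, weighted graph, and let $\tau=0$ (no time-delay). Fix one of the six uncertainty structures listed in the context. For $\alpha>0$, let $\eta_i(\alpha)$ (resp. $\nu_e(\alpha)$) denote the agent (resp. link) centrality indices of the network obtained by replacing every weight $w(e)$ by $\alpha w(e)$. Then for all $\alpha>0$: - for all agents $i,j$ (agent-associated structures), $\eta_i(\alpha)>\eta_j(\alpha)$ if and only if $\eta_i(1)>\eta_j(1)$; - for all links $e,f$ (link-associated structures), $\nu_e(\alpha)>\nu_f(\alpha)$ if and only if $\nu_e(1)>\nu_f(1)$. That is, the order of precedence of agents and the ranking of links are invariant under uniform scaling of all link weights.
   Context: Graph matrices: - $E$ is the signed incidence matrix (arbitrary orientation) and $W=\mathrm{diag}(w(e))$. - $L=EWE^T$ is the Laplacian, $\Delta$ the diagonal weighted-degree matrix, $A=\Delta-L$ the weighted adjacency matrix. - $M_n=I_n-\frac1n\mathbf1\mathbf1^T$. The network is $$\dot x(t)=-L\,x(t-\tau)+B\,\xi(t),\qquad y=M_nx,$$ with $\xi$ a vector of mutually independent zero-mean Gaussian white noises with intensities $\sigma_k^2$. The six uncertainty structures are: - agent-associated (noises indexed by agents): dynamics noise $B=I_n$; sensor noise $B=L$; receiver noise $B=\Delta$; emitter noise $B=A$; - link-associated (noises indexed by links): communication noise $B=EW$; measurement noise $B=-E$. In each case $B$ is computed from the (scaled) weights. The performance is $$\rho_{ss}=\lim_{t\to\infty}\mathbb E[y^Ty]=\frac1{2\pi}\int\mathrm{Tr}[G^HG]d\omega,\qquad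 G(s)=M_n(sI+e^{-\tau s}L)^{-1}B\,\mathrm{diag}(\sigma_k).$$ Centralities are $\eta_i=\partial\rho_{ss}/\partial\sigma_i^2$ (agent noise) and $\nu_e=\partial\rho_{ss}/\partial\sigma_e^2$ (link noise). *)

From HB Require Import structures.
From mathcomp Require Import all_boot all_order all_algebra.
From mathcomp Require Import all_classical all_reals all_analysis.
From mathcomp Require Import complex.

Set Implicit Arguments.
Unset Strict Implicit.
Unset Printing Implicit Defensive.

Import Order.TTheory GRing.Theory Num.Theory.
Local Open Scope ring_scope.

(* Graphs: n agents ('I_n), m links ('I_m).  Link e joins the agents    *)
(* src e and dst e; the pair (src e, dst e) is an arbitrary orientation *)
(* of the undirected link e.  w e is the weight of link e.              *)

Definition simple_graph (n m : nat) (src dst : 'I_m -> 'I_n) : Prop :=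
  (forall e, src e != dst e) /\
  (forall e f, e != f ->
     ~ ((src e == src f) && (dst e == dst f) || (src e == dst f) && (dst e == src f))).

Definition adj (n m : nat) (src dst : 'I_m -> 'I_n) : rel 'I_n :=
  fun i j => [exists e, ((src e == i) && (dst e == j)) || ((src e == j) && (dst e == i))].

Definition connected_graph (n m : nat) (src dst : 'I_m -> 'I_n) : Prop :=
  forall i j : 'I_n, connect (adj src dst) i j.

Section GraphMatrices.
Variables (R : realType) (n m : nat) (src dst : 'I_m -> 'I_n) (w : 'I_m -> R).

Definition incidence : 'M[R]_(n, m) :=
  \matrix_(i, e) ((i == src e)%:R - (i == dst e)%:R).

Definition weight_mx : 'M[R]_m := \matrix_(e, f) ((e == f)%:R * w e).

Definition laplacian : 'M[R]_n := incidence *m weight_mx *m incidence^T.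

Definition degree_mx : 'M[R]_n :=
  \matrix_(i, j) ((i == j)%:R * \sum_(e < m | (src e == i) || (dst e == i)) w e).

Definition adjacency_mx : 'M[R]_n := degree_mx - laplacian.

End GraphMatrices.

Definition centering (R : realType) (n : nat) : 'M[R]_n :=
  1%:M - (n%:R)^-1 *: const_mx 1.

Inductive uncertainty :=
  | DynamicsNoise
  | SensorNoise
  | ReceiverNoise
  | EmitterNoise
  | CommunicationNoise
  | MeasurementNoise.

Definition agent_associated (s : uncertainty) : bool :=
  match s with
  | DynamicsNoise | SensorNoise | ReceiverNoise | EmitterNoise => true
  | CommunicationNoise | MeasurementNoise => false
  end.

Definition nnoise (n m : nat) (s : uncertainty) : nat :=
  if agent_associated s then n else m.

Definition input_mx (R : realType) (n m : nat) (src dst : 'I_m -> 'I_n)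
  (w : 'I_m -> R) (s : uncertainty) : 'M[R]_(n, nnoise n m s) :=
  match s as s0 return 'M[R]_(n, nnoise n m s0) with
  | DynamicsNoise => 1%:M
  | SensorNoise => laplacian src dst w
  | ReceiverNoise => degree_mx src dst w
  | EmitterNoise => adjacency_mx src dst w
  | CommunicationNoise => incidence R src dst *m weight_mx w
  | MeasurementNoise => - incidence R src dst
  end.

Local Open Scope complex_scope.

Definition cmx (R : realType) (p q : nat) (M : 'M[R]_(p, q)) : 'M[R[i]]_(p, q) :=
  map_mx (fun x => x%:C) M.

Definition ctr (R : realType) (p q : nat) (M : 'M[R[i]]_(p, q)) : 'M[R[i]]_(q, p) :=
  (map_mx conjc M)^T.

Section Performance.
Variables (R : realType) (n m : nat) (src dst : 'I_m -> 'I_n) (w : 'I_m -> R)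
  (s : uncertainty).

(* G(j omega) = M_n (j omega I + e^{-tau j omega} L)^{-1} B diag(sigma_k), tau = 0,
   where sigma2 k = sigma_k^2 is the intensity of noise k *)
Definition transfer (sigma2 : 'I_(nnoise n m s) -> R) (omega : R)
  : 'M[R[i]]_(n, nnoise n m s) :=
  cmx (centering R n) *m
  invmx ((Complex 0 omega) *: 1%:M + cmx (laplacian src dst w)) *m
  cmx (input_mx src dst w s) *m
  cmx (\matrix_(k, l) ((k == l)%:R * Num.sqrt (sigma2 k))).

Definition rho_ss (sigma2 : 'I_(nnoise n m s) -> R) : R :=
  fine (\int[lebesgue_measure]_(omega in [set: R])
          (@complex.Re R (\tr (ctr (transfer sigma2 omega) *m transfer sigma2 omega)))%:E)
  / (2 * pi).

Definition centrality (sigma2 : 'I_(nnoise n m s) -> R) (k : 'I_(nnoise n m s)) : R :=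
  derive1 (fun x : R => rho_ss (fun l => if l == k then x else sigma2 l)) (sigma2 k).

End Performance.

Arguments transfer {R n m} src dst w s sigma2 omega.
Arguments rho_ss {R n m} src dst w s sigma2.
Arguments centrality {R n m} src dst w s sigma2 k.

(* Scaling every weight by [a > 0] scales the Laplacian [L] by [a] and the input matrix
   [B] by a gain [b] ([b = 1] for dynamics and measurement noise, [b = a] otherwise).  For
   [omega <> 0] the matrix [i omega I + L] is invertible because [L] is real symmetric, so
   [(i omega I + a L)^-1 = a^-1 (i (omega / a) I + L)^-1] and the integrand of [rho_ss] at
   [omega] is [(b / a)^2] times the unscaled integrand at [omega / a].  The substitution
   [omega = a nu] then gives [rho_ss (a w) = (b / a)^2 a rho_ss w] for all noise
   intensities, so every centrality, a derivative of [rho_ss] in the intensities, is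
   multiplied by the same positive constant and the ranking is unchanged. *)

From HB Require Import structures.
From mathcomp Require Import all_boot all_order all_algebra.
From mathcomp Require Import all_classical all_reals all_analysis.
From mathcomp Require Import complex.
From mathcomp Require Import measurable_realfun.
From mathcomp Require Import ring lra.

Set Implicit Arguments.
Unset Strict Implicit.
Unset Printing Implicit Defensive.

Import Order.TTheory GRing.Theory Num.Theory.
(* [Num.Theory] exports lemmas named [Re] and [Im]; give the projections of [R[i]] priority. *)
Import mathcomp.real_closed.complex.
Local Open Scope ring_scope.

Section WeightScaling.
Variables (R : realType) (n m : nat) (src dst : 'I_m -> 'I_n) (w : 'I_m -> R) (a : R).

Lemma weight_mxZ : weight_mx (fun e => a * w e) = a *: weight_mx w.
Proof. by apply/matrixP => i j; rewrite !mxE mulrCA. Qed.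

Lemma laplacianZ : laplacian src dst (fun e => a * w e) = a *: laplacian src dst w.
Proof. by rewrite /laplacian weight_mxZ scalemxAl scalemxAr. Qed.

Lemma degree_mxZ : degree_mx src dst (fun e => a * w e) = a *: degree_mx src dst w.
Proof. by apply/matrixP => i j; rewrite !mxE -mulr_sumr mulrCA. Qed.

Lemma adjacency_mxZ :
  adjacency_mx src dst (fun e => a * w e) = a *: adjacency_mx src dst w.
Proof. by rewrite /adjacency_mx degree_mxZ laplacianZ scalerBr. Qed.

Definition input_gain (s : uncertainty) : R :=
  match s with DynamicsNoise | MeasurementNoise => 1 | _ => a end.

Lemma input_mxZ s :
  input_mx src dst (fun e => a * w e) s = input_gain s *: input_mx src dst w s.
Proof.
case: s => /=.
- by rewrite scale1r.
- exact: laplacianZ.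
- exact: degree_mxZ.
- exact: adjacency_mxZ.
- by rewrite weight_mxZ scalemxAr.
- by rewrite scale1r.
Qed.

Lemma trmx_laplacian : (laplacian src dst w)^T = laplacian src dst w.
Proof.
rewrite /laplacian !trmx_mul trmxK mulmxA.
congr (_ *m _ *m _); apply/matrixP => i j; rewrite !mxE.
by have [->|_] := eqVneq i j; rewrite ?mul0r.
Qed.

End WeightScaling.

Local Open Scope complex_scope.

Section ComplexParts.
Variable R : rcfType.
Implicit Types x y : R[i].

Lemma Re_add x y : Re (x + y) = Re x + Re y. Proof. by case: x; case: y. Qed.
Lemma Im_add x y : Im (x + y) = Im x + Im y. Proof. by case: x; case: y. Qed.

Lemma Re_mul x y : Re (x * y) = Re x * Re y - Im x * Im y.
Proof. by case: x; case: y. Qed.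

Lemma Im_mul x y : Im (x * y) = Re x * Im y + Im x * Re y.
Proof. by case: x => ? ?; case: y => ? ? /=; rewrite addrC. Qed.

Lemma Re_conj x : Re x^* = Re x. Proof. by case: x. Qed.
Lemma Im_conj x : Im x^* = - Im x. Proof. by case: x. Qed.

Lemma Re_inv x : Re x^-1 = Re x / (Re x ^+ 2 + Im x ^+ 2).
Proof. by case: x. Qed.

Lemma Im_inv x : Im x^-1 = - (Im x / (Re x ^+ 2 + Im x ^+ 2)).
Proof. by case: x. Qed.

Lemma Re_conjM x : Re (x^* * x) = Re x ^+ 2 + Im x ^+ 2.
Proof. by rewrite Re_mul Re_conj Im_conj mulNr opprK -!expr2. Qed.

Lemma normc2_eq0 x : (Re x ^+ 2 + Im x ^+ 2 == 0) = (x == 0).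
Proof.
rewrite paddr_eq0 ?sqr_ge0 // !sqrf_eq0.
by case: x => ? ?; rewrite eq_complex.
Qed.

Lemma Re_sum (I : Type) (r : seq I) (P : pred I) (F : I -> R[i]) :
  Re (\sum_(i <- r | P i) F i) = \sum_(i <- r | P i) Re (F i).
Proof. by elim/big_rec2: _ => // i u v _ <-; rewrite Re_add. Qed.

End ComplexParts.

Lemma cmxZ (R : realType) p q (k : R) (M : 'M[R]_(p, q)) : cmx (k *: M) = k%:C *: cmx M.
Proof. by apply/matrixP => i j; rewrite !mxE rmorphM. Qed.

Lemma ctrZ (R : realType) p q (k : R) (M : 'M[R[i]]_(p, q)) :
  ctr (k%:C *: M) = k%:C *: ctr M.
Proof.
by apply/matrixP => i j; rewrite !mxE rmorphM; congr (_ * _); exact: conjc_real.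
Qed.

Lemma ctrK (R : realType) p q (M : 'M[R[i]]_(p, q)) : ctr (ctr M) = M.
Proof. by apply/matrixP => i j; rewrite !mxE conjcK. Qed.

Lemma Re_diag_mulmx_ctr (R : realType) p q (M : 'M[R[i]]_(p, q)) i :
  Re ((ctr M *m M) i i) = \sum_k (Re (M k i) ^+ 2 + Im (M k i) ^+ 2).
Proof. by rewrite mxE Re_sum; apply: eq_bigr => k _; rewrite !mxE Re_conjM. Qed.

Section ImaginaryShift.
Variables (R : realType) (n : nat) (S : 'M[R]_n).
Hypothesis symS : S^T = S.

Lemma Im_quadform_sym (u : 'rV[R[i]]_n) : Im ((u *m cmx S *m ctr u) 0 0) = 0.
Proof.
(* Transposing the 1 x 1 matrix [u S u^H] conjugates it, as [S] is real symmetric. *)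
have conj_quad : ((u *m cmx S *m ctr u) 0 0)^* = (u *m cmx S *m ctr u) 0 0.
  have -> : ((u *m cmx S *m ctr u) 0 0)^* = map_mx conjc (u *m cmx S *m ctr u) 0 0.
    by rewrite [RHS]mxE.
  rewrite !map_mxM.
  have -> : map_mx conjc (cmx S) = cmx S.
    by apply/matrixP => i j; rewrite !mxE conjc_real.
  have -> : map_mx conjc (ctr u) = u^T.
    by apply/matrixP => i j; rewrite !mxE conjcK.
  have tr_scalar (A : 'M[R[i]]_1) : A 0 0 = A^T 0 0 by rewrite mxE.
  rewrite [LHS]tr_scalar !trmx_mul trmxK mulmxA.
  by rewrite /cmx map_trmx symS.
by have := congr1 (@Im R) conj_quad; rewrite Im_conj => h; lra.
Qed.

Lemma unitmx_imag_shift (y : R) : y != 0 -> Complex 0 y *: 1%:M + cmx S \in unitmx.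
Proof.
move=> y0; rewrite -row_free_unit; apply: inj_row_free => u u0.
(* If [u (i y I + S) = 0], the imaginary part of [u (i y I + S) u^H] is [y |u|^2]. *)
have : Im ((u *m (Complex 0 y *: 1%:M + cmx S) *m ctr u) 0 0) = 0.
  by rewrite u0 mul0mx mxE.
rewrite mulmxDr -scalemxAr mulmx1 mulmxDl -scalemxAl [X in Im X]mxE [X in Im (X + _)]mxE.
rewrite Im_add Im_quadform_sym addr0 Im_mul /= mul0r add0r.
move=> /eqP; rewrite mulf_eq0 (negbTE y0) /= -{1}[u]ctrK Re_diag_mulmx_ctr.
rewrite psumr_eq0 => [/allP u_eq0|k _]; last by rewrite addr_ge0 ?sqr_ge0.
apply/matrixP => i j; rewrite (ord1 i) [RHS]mxE -[u]ctrK [LHS]mxE.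
move/(_ j (mem_index_enum _)): u_eq0; rewrite /= normc2_eq0 => /eqP u_j0.
by rewrite mxE u_j0 conjc0.
Qed.

End ImaginaryShift.

Lemma Re_mxtrace_ctrM_ge0 (R : realType) p q (M : 'M[R[i]]_(p, q)) :
  0 <= Re (\tr (ctr M *m M)).
Proof.
rewrite /mxtrace Re_sum; apply: sumr_ge0 => i _.
by rewrite Re_diag_mulmx_ctr; apply: sumr_ge0 => k _; rewrite addr_ge0 ?sqr_ge0.
Qed.

Definition h2_density (R : realType) (n m : nat) (src dst : 'I_m -> 'I_n)
    (w : 'I_m -> R) (s : uncertainty) (sigma2 : 'I_(nnoise n m s) -> R) (omega : R) : R :=
  Re (\tr (ctr (transfer src dst w s sigma2 omega) *m transfer src dst w s sigma2 omega)).

Arguments h2_density {R n m} src dst w s sigma2 omega.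

Section TransferScaling.
Variables (R : realType) (n m : nat) (src dst : 'I_m -> 'I_n) (w : 'I_m -> R)
  (s : uncertainty) (sigma2 : 'I_(nnoise n m s) -> R) (a : R).
Hypothesis a_gt0 : 0 < a.

(* At [omega = 0] this fails: [L] is singular and [invmx] returns it unchanged. *)
Lemma transferZ (omega : R) : omega != 0 ->
  transfer src dst (fun e => a * w e) s sigma2 omega =
  (input_gain a s / a)%:C *: transfer src dst w s sigma2 (omega / a).
Proof.
move=> omega0; rewrite /transfer laplacianZ input_mxZ !cmxZ.
have a0 : a != 0 by rewrite gt_eqF.
have -> : Complex 0 omega *: (1%:M : 'M[R[i]]_n) + a%:C *: cmx (laplacian src dst w)
    = a%:C *: (Complex 0 (omega / a) *: 1%:M + cmx (laplacian src dst w)).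
  rewrite scalerDr scalerA; congr (_ *: _ + _).
  by apply/eqP; rewrite eq_complex /=; apply/andP; split; apply/eqP; field.
have omega_a0 : omega / a != 0 by rewrite mulf_neq0 ?invr_eq0.
have a_unit : a%:C \is a GRing.unit by rewrite unitfE fmorph_eq0.
rewrite invmxZ ?unitmxZ ?unitmx_imag_shift ?trmx_laplacian //.
by rewrite -!scalemxAr -!scalemxAl !scalerA rmorphM fmorphV.
Qed.

Lemma h2_densityZ (omega : R) : omega != 0 ->
  h2_density src dst (fun e => a * w e) s sigma2 omega =
  (input_gain a s / a) ^+ 2 * h2_density src dst w s sigma2 (omega / a).
Proof.
move=> omega0; rewrite /h2_density transferZ // ctrZ -scalemxAr -scalemxAl.
by rewrite scalerA mxtraceZ -rmorphM Re_mul /= mul0r subr0 expr2.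
Qed.

End TransferScaling.

Lemma measurable_invr (R : realType) : measurable_fun [set: R] (@GRing.inv R).
Proof.
rewrite -(setvU [set 0%R]).
apply/measurable_funU => //; first exact: measurableC.
split; last exact: measurable_fun_set1.
apply: open_continuous_measurable_fun.
  apply: closed_openC; apply: accessible_closed_set1; apply: hausdorff_accessible.
  exact: norm_hausdorff.
move=> x; rewrite inE /= => x0; apply: inv_continuous; exact/eqP.
Qed.

Section ComplexMeasurability.
Local Open Scope classical_set_scope.
Variables (d : measure_display) (T : measurableType d) (R : realType).

(* [R[i]] has no measurable structure: measurability is asked of both components. *)
Definition measurable_cfun (f : T -> R[i]) :=
  measurable_fun [set: T] (fun x => Re (f x)) /\ measurable_fun [set: T] (fun x => Im (f x)).

Definition measurable_mxfun p q (F : T -> 'M[R[i]]_(p, q)) :=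
  forall i j, measurable_cfun (fun x => F x i j).

Lemma measurable_cfun_cst c : measurable_cfun (fun _ => c).
Proof. by split; exact: measurable_cst. Qed.

Lemma measurable_cfun_add f g : measurable_cfun f -> measurable_cfun g ->
  measurable_cfun (fun x => f x + g x).
Proof.
move=> [f1 f2] [g1 g2]; split.
- by under eq_fun do rewrite Re_add; exact: measurable_funD.
- by under eq_fun do rewrite Im_add; exact: measurable_funD.
Qed.

Lemma measurable_cfun_mul f g : measurable_cfun f -> measurable_cfun g ->
  measurable_cfun (fun x => f x * g x).
Proof.
move=> [f1 f2] [g1 g2]; split.
- by under eq_fun do rewrite Re_mul; apply: measurable_funB; exact: measurable_funM.
- by under eq_fun do rewrite Im_mul; apply: measurable_funD; exact: measurable_funM.
Qed.

Lemma measurable_cfun_conj f : measurable_cfun f -> measurable_cfun (fun x => (f x)^*).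
Proof.
move=> [f1 f2]; split.
- by under eq_fun do rewrite Re_conj.
- by under eq_fun do rewrite Im_conj; exact: measurable_funN.
Qed.

Lemma measurable_cfun_inv f : measurable_cfun f -> measurable_cfun (fun x => (f x)^-1).
Proof.
move=> [f1 f2].
have mV : measurable_fun [set: T] (fun x => (Re (f x) ^+ 2 + Im (f x) ^+ 2)^-1).
  by apply: (measurableT_comp (@measurable_invr R)); apply: measurable_funD;
    exact: measurable_funX.
split.
- by under eq_fun do rewrite Re_inv; exact: measurable_funM.
- by under eq_fun do rewrite Im_inv; apply: measurable_funN; exact: measurable_funM.
Qed.

Lemma measurable_cfun_if (b : T -> bool) f g : measurable_fun [set: T] b ->
  measurable_cfun f -> measurable_cfun g -> measurable_cfun (fun x => if b x then f x else g x).
Proof.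
move=> mb [f1 f2] [g1 g2]; split.
- under eq_fun do rewrite (fun_if (@Re R)); exact: measurable_fun_ifT.
- under eq_fun do rewrite (fun_if (@Im R)); exact: measurable_fun_ifT.
Qed.

Lemma measurable_cfun_sum (I : Type) (r : seq I) (P : pred I) (F : I -> T -> R[i]) :
  (forall i, measurable_cfun (F i)) ->
  measurable_cfun (fun x => \sum_(i <- r | P i) F i x).
Proof.
move=> mF; elim: r => [|i r IH].
  by under eq_fun do rewrite big_nil; exact: measurable_cfun_cst.
under eq_fun do rewrite big_cons.
by case: (P i) => //; exact: measurable_cfun_add.
Qed.

Lemma measurable_cfun_prod (I : Type) (r : seq I) (P : pred I) (F : I -> T -> R[i]) :
  (forall i, measurable_cfun (F i)) ->
  measurable_cfun (fun x => \prod_(i <- r | P i) F i x).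
Proof.
move=> mF; elim: r => [|i r IH].
  by under eq_fun do rewrite big_nil; exact: measurable_cfun_cst.
under eq_fun do rewrite big_cons.
by case: (P i) => //; exact: measurable_cfun_mul.
Qed.

Lemma measurable_mxfun_cst p q (M : 'M[R[i]]_(p, q)) : measurable_mxfun (fun _ => M).
Proof. by move=> i j; exact: measurable_cfun_cst. Qed.

Lemma measurable_mxfun_add p q (F G : T -> 'M[R[i]]_(p, q)) :
  measurable_mxfun F -> measurable_mxfun G -> measurable_mxfun (fun x => F x + G x).
Proof.
move=> mF mG i j; under eq_fun do rewrite mxE.
exact: measurable_cfun_add.
Qed.

Lemma measurable_mxfun_mul p q r (F : T -> 'M[R[i]]_(p, q)) (G : T -> 'M[R[i]]_(q, r)) :
  measurable_mxfun F -> measurable_mxfun G -> measurable_mxfun (fun x => F x *m G x).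
Proof.
move=> mF mG i j; under eq_fun do rewrite mxE.
by apply: measurable_cfun_sum => k; exact: measurable_cfun_mul.
Qed.

Lemma measurable_mxfun_scale p q (c : T -> R[i]) (F : T -> 'M[R[i]]_(p, q)) :
  measurable_cfun c -> measurable_mxfun F -> measurable_mxfun (fun x => c x *: F x).
Proof.
move=> mc mF i j; under eq_fun do rewrite mxE.
exact: measurable_cfun_mul.
Qed.

Lemma measurable_mxfun_ctr p q (F : T -> 'M[R[i]]_(p, q)) :
  measurable_mxfun F -> measurable_mxfun (fun x => ctr (F x)).
Proof.
move=> mF i j; under eq_fun do rewrite !mxE.
exact: measurable_cfun_conj.
Qed.

Lemma measurable_cfun_det k (F : T -> 'M[R[i]]_k) :
  measurable_mxfun F -> measurable_cfun (fun x => \det (F x)).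
Proof.
move=> mF; apply: measurable_cfun_sum => sigma.
apply: measurable_cfun_mul; first exact: measurable_cfun_cst.
by apply: measurable_cfun_prod => i; exact: mF.
Qed.

Lemma measurable_mxfun_adj k (F : T -> 'M[R[i]]_k) :
  measurable_mxfun F -> measurable_mxfun (fun x => \adj (F x)).
Proof.
move=> mF i j; under eq_fun do rewrite mxE.
apply: measurable_cfun_mul; first exact: measurable_cfun_cst.
apply: measurable_cfun_det => i' j'; under eq_fun do rewrite !mxE.
exact: mF.
Qed.

Lemma measurable_mxfun_inv k (F : T -> 'M[R[i]]_k) :
  measurable_mxfun F -> measurable_mxfun (fun x => invmx (F x)).
Proof.
move=> mF i j.
have -> : (fun x => invmx (F x) i j) = fun x =>
    if F x \in unitmx then (\det (F x))^-1 * \adj (F x) i j else F x i j.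
  by apply/funext => x; rewrite /invmx; case: ifP; rewrite ?mxE.
have [mRe mIm] := measurable_cfun_det mF.
apply: measurable_cfun_if => //.
- under eq_fun do rewrite unitmxE unitfE eq_complex negb_and.
  by apply: measurable_or; apply: measurable_neg; apply: measurable_fun_eqr => //;
    exact: measurable_cst.
- apply: measurable_cfun_mul; last exact: measurable_mxfun_adj.
  exact/measurable_cfun_inv/measurable_cfun_det.
Qed.

End ComplexMeasurability.

Lemma measurable_cfun_imag (R : realType) : measurable_cfun (fun x : R => Complex 0 x).
Proof. by split => /=; [exact: measurable_cst | exact: measurable_id]. Qed.

Section DensityMeasurability.
Local Open Scope classical_set_scope.
Variables (R : realType) (n m : nat) (src dst : 'I_m -> 'I_n) (w : 'I_m -> R)
  (s : uncertainty) (sigma2 : 'I_(nnoise n m s) -> R).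

Lemma measurable_transfer : measurable_mxfun (transfer src dst w s sigma2).
Proof.
apply: measurable_mxfun_mul; last exact: measurable_mxfun_cst.
apply: measurable_mxfun_mul; last exact: measurable_mxfun_cst.
apply: measurable_mxfun_mul; first exact: measurable_mxfun_cst.
apply/measurable_mxfun_inv/measurable_mxfun_add; last exact: measurable_mxfun_cst.
by apply: measurable_mxfun_scale; [exact: measurable_cfun_imag | exact: measurable_mxfun_cst].
Qed.

Lemma measurable_h2_density : measurable_fun [set: R] (h2_density src dst w s sigma2).
Proof.
have mG := measurable_mxfun_mul (measurable_mxfun_ctr measurable_transfer) measurable_transfer.
exact: (measurable_cfun_sum _ _ (fun i => mG i i)).1.
Qed.

End DensityMeasurability.

Section LebesgueDilation.
Local Open Scope classical_set_scope.
Local Open Scope ereal_scope.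
Variables (R : realType) (a : R).
Hypothesis a_gt0 : (0 < a)%R.

Let dilate (x : R) : R := (x / a)%R.

Let measurable_dilate : measurable_fun [set: R] dilate.
Proof. exact: mulrr_measurable. Qed.

Lemma lebesgue_measure_dilate (A : set R) : measurable A ->
  lebesgue_measure (dilate @^-1` A) = a%:E * lebesgue_measure A.
Proof.
have ia : (0 <= a^-1)%R by rewrite invr_ge0 ltW.
(* [have] abstracts the measurability of [dilate], on which the measure structure of
   [pushforward _ dilate] depends, as a first premise of [itv_pushforward]. *)
have itv_pushforward (X : set R) : ocitv X -> lebesgue_measure X =
    mscale (NngNum ia)
      (pushforward lebesgue_measure (dilate : measurableTypeR R -> measurableTypeR R)) X.
  move=> [[x1 x2] _ <-]; rewrite /mscale /= /pushforward.
  have -> : dilate @^-1` `]x1, x2] = `](x1 * a)%R, (x2 * a)%R]%classic.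
    by apply/seteqP; split => x /=; rewrite !in_itv /= ltr_pdivlMr // ler_pdivrMr.
  rewrite !lebesgue_measure_itv /= !lte_fin ltr_pM2r //.
  case: ifP => _; last by rewrite mule0.
  by rewrite -EFinB -EFinM; congr EFin; field; exact: lt0r_neq0.
move=> mA; rewrite (lebesgue_measure_unique (itv_pushforward measurable_dilate) mA).
by rewrite /mscale /= muleA -EFinM mulfV ?mul1e // lt0r_neq0.
Qed.

Lemma ge0_integral_dilate (f : R -> \bar R) :
  measurable_fun [set: R] f -> (forall x, 0 <= f x) ->
  \int[lebesgue_measure]_x f (x / a)%R = a%:E * \int[lebesgue_measure]_x f x.
Proof.
move=> mf f0.
have -> : \int[lebesgue_measure]_x f (x / a)%R =
    \int[lebesgue_measure]_(x in dilate @^-1` [set: R]) (f \o dilate) x.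
  by rewrite preimage_setT.
rewrite -(@ge0_integral_pushforward _ _ (measurableTypeR R) (measurableTypeR R) R _
  measurable_dilate lebesgue_measure) //.
rewrite (eq_measure_integral (mscale (NngNum (ltW a_gt0)) lebesgue_measure)).
  by rewrite ge0_integral_mscale.
by move=> B mB _; exact: lebesgue_measure_dilate.
Qed.

Lemma integral_dilate_off0 (g h : R -> R) (c : R) : (0 <= c)%R ->
  measurable_fun [set: R] g -> measurable_fun [set: R] h -> (forall x, 0 <= h x)%R ->
  (forall x, x != 0%R -> g x = c * h (x / a))%R ->
  \int[lebesgue_measure]_x (g x)%:E = (c * a)%:E * \int[lebesgue_measure]_x (h x)%:E.
Proof.
move=> c_ge0 mg mh h_ge0 gE.
have mD : measurable ([set: R] `\ 0%R) by exact: measurableD.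
have mch : measurable_fun [set: R] (fun x => (c * h (x / a))%:E).
  apply/measurable_EFinP/measurable_funM; first exact: measurable_cst.
  exact: (measurableT_comp mh measurable_dilate).
have mgE : measurable_fun [set: R] (fun x => (g x)%:E) by exact/measurable_EFinP.
rewrite -(@integral_setD1 _ _ 0%R [set: R]) //; last exact: measurable_funS mgE.
under eq_integral => x /[!inE] -[_ /eqP x0] do rewrite (gE x x0).
rewrite (@integral_setD1 _ _ 0%R [set: R]) //; last exact: measurable_funS mch.
under eq_integral do rewrite EFinM.
have mhd : measurable_fun [set: R] (fun x => (h (x / a))%:E).
  by apply/measurable_EFinP; exact: measurableT_comp mh measurable_dilate.
rewrite (ge0_integralZl lebesgue_measure measurableT mhd) ?lee_fin //; last first.
  by move=> x _; rewrite lee_fin.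
rewrite (ge0_integral_dilate (f := fun y => (h y)%:E)) ?EFinM ?muleA //.
exact/measurable_EFinP.
Qed.

End LebesgueDilation.

Lemma gt0_fine_EFinM (R : realType) (k : R) (x : \bar R) :
  0 < k -> fine (k%:E * x)%E = k * fine x.
Proof.
by move=> k_gt0; case: x => [r| |] //=; rewrite ?gt0_muley ?gt0_muleNy ?lte_fin ?mulr0.
Qed.

Definition rho_gain (R : realType) (a : R) (s : uncertainty) : R :=
  (input_gain a s / a) ^+ 2 * a.

Lemma rho_gain_gt0 (R : realType) (a : R) s : 0 < a -> 0 < rho_gain a s.
Proof.
by move=> a_gt0; rewrite mulr_gt0 // exprn_gt0 // divr_gt0 //; case: s.
Qed.

Lemma rho_ssZ (R : realType) (n m : nat) (src dst : 'I_m -> 'I_n) (w : 'I_m -> R)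
    (s : uncertainty) (sigma2 : 'I_(nnoise n m s) -> R) (a : R) : 0 < a ->
  rho_ss src dst (fun e => a * w e) s sigma2 = rho_gain a s * rho_ss src dst w s sigma2.
Proof.
move=> a_gt0; rewrite /rho_ss (integral_dilate_off0 a_gt0
  (g := h2_density src dst (fun e => a * w e) s sigma2) (h := h2_density src dst w s sigma2)
  (c := (input_gain a s / a) ^+ 2)) ?sqr_ge0 //.
- by rewrite gt0_fine_EFinM ?rho_gain_gt0 // mulrA.
- exact: measurable_h2_density.
- exact: measurable_h2_density.
- by move=> x; exact: Re_mxtrace_ctrM_ge0.
- by move=> x; exact: h2_densityZ.
Qed.

Lemma derive1_not_derivable (R : realType) (f : R -> R) x :
  ~ derivable f x 1 -> f^`()%classic x = 0.
Proof.
move=> nf; rewrite derive1E /derive /lim /lim_in getPN // => l fl.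
by apply: nf; exact: (cvgP l fl).
Qed.

(* Unlike [derive1Ml], this needs no derivability: [centrality] does not assume it. *)
Lemma derive1Ml_neq0 (R : realType) (k : R) (f : R -> R) (x : R) : k != 0 ->
  (fun y => k * f y)^`()%classic x = k * f^`()%classic x.
Proof.
move=> k0; have [df|ndf] := pselect (derivable f x 1); first exact: derive1Ml.
have ndkf : ~ derivable (fun y => k * f y) x 1.
  move=> dkf; apply: ndf.
  have -> : f = k^-1 \*: (fun y => k * f y).
    by apply/funext => y; change (f y = k^-1 * (k * f y)); rewrite mulKf.
  exact: derivableZ.
by rewrite !derive1_not_derivable // mulr0.
Qed.

Lemma centralityZ (R : realType) (n m : nat) (src dst : 'I_m -> 'I_n) (w : 'I_m -> R)
    (s : uncertainty) (sigma2 : 'I_(nnoise n m s) -> R) (a : R) k : 0 < a ->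
  centrality src dst (fun e => a * w e) s sigma2 k =
  rho_gain a s * centrality src dst w s sigma2 k.
Proof.
move=> a_gt0; rewrite /centrality -derive1Ml_neq0 ?gt_eqF ?rho_gain_gt0 //.
by congr (_^`()%classic _); apply/funext => x; exact: rho_ssZ.
Qed.

Theorem theorem11 (R : realType) (n m : nat) (src dst : 'I_m -> 'I_n)
  (w : 'I_m -> R) (s : uncertainty) (sigma2 : 'I_(nnoise n m s) -> R) :
  simple_graph src dst ->
  connected_graph src dst ->
  (forall e, 0 < w e) ->
  (forall k, 0 < sigma2 k) ->
  forall alpha : R, 0 < alpha ->
  forall i j : 'I_(nnoise n m s),
    (centrality src dst (fun e => alpha * w e) s sigma2 j <
       centrality src dst (fun e => alpha * w e) s sigma2 i)
    <->
    (centrality src dst w s sigma2 j < centrality src dst w s sigma2 i).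
Proof.
(* The scaling identity holds for any graph, weights and intensities. *)
move=> _ _ _ _ alpha alpha_gt0 i j.
by rewrite !centralityZ // ltr_pM2l // rho_gain_gt0.
Qed.
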